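(* (i) If $y\in\mathcal{SH}(r)$ satisfies $P_1(y)\ne0$ and $P_2(y)\ne0$, then $$\rho(G)y=\{y'\in\mathcal{SH}(r):\ P_1(y)P_1(y')>0\ \text{and}\ P_2(y)P_2(y')>0\}.$$ (ii) Consequently $(G,\rho,\mathcal{SH}(r))$ is a prehomogeneous vector space (it has an open $\rho(G)$-orbit) and its singular set, the complement of the union of the open orbits, is $\Sigma=\{y\in\mathcal{SH}(r):P_1(y)P_2(y)=0\}$.
   Context: Fix an integer $r\ge 2$. For $\ell=1,\dots,r+1$ let $Y_\ell\in\mathrm{Mat}(r,\mathbb R)$ have $(i,j)$-entry $\delta_{i+j,\ell+1}$. Let $\mathcal{SH}(r)=\mathrm{span}_{\mathbb R}(Y_1,\dots,Y_{r+1})$, the space of sub-Hankel matrices: $y=\sum_\ell y_\ell Y_\ell$ is the $r\times r$ matrix whose $(i,j)$-entry is $y_{i+j-1}$ if $i+j\le r+2$ and $0$ otherwise. For $k=0,\dots,r-1$ let $T_k$ be the $r\times r$ matrix with $(i,j)$-entry $(r-k-i+1)\delta_{j,i+k}$. Put $H_1=\frac1rT_0-\frac12I_r$, $H_2=I_r-\frac1rT_0=\mathrm{diag}(0,\frac1r,\dots,\frac{r-1}r)$. Let $\mathfrak g=\mathrm{span}(H_1,H_2,T_1,\dots,T_{r-1})$ (a solvable Lie algebra of upper triangular matrices) and $G\subset GL(r,\mathbb R)$ the connected Lie subgroup with Lie algebra $\mathfrak g$. Define $\rho(g)y=g\,y\,{}^tg$ for $g\in G$, $y\in\mathcal{SH}(r)$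 (this preserves $\mathcal{SH}(r)$). Let $P_1(y)=\det y$ and $P_2(y)=y_{r+1}$. *)

(* real matrices are needed together with the real exponential
   (matrix exponential), so we work with Stdlib Reals and represent r x r
   matrices as functions nat -> nat -> R, indices 0..r-1 (0-indexed; the paper's
   entry (i,j) is our entry (i-1, j-1)).  Entries outside 0..r-1 are ignored. *)
From Stdlib Require Import Reals Lra Lia Arith.
Open Scope R_scope.

Definition mat := nat -> nat -> R.

Fixpoint rsum (n : nat) (f : nat -> R) : R :=
  match n with
  | O => 0
  | S n' => rsum n' f + f n'
  end.

Definition mid : mat := fun i j => if Nat.eqb i j then 1 else 0.
Definition mmul (r : nat) (A B : mat) : mat :=
  fun i j => rsum r (fun k => A i k * B k j).
Definition mtr (A : mat) : mat := fun i j => A j i.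

Definition meq (r : nat) (A B : mat) : Prop :=
  forall i j, (i < r)%nat -> (j < r)%nat -> A i j = B i j.

Fixpoint mpow (r : nat) (X : mat) (m : nat) : mat :=
  match m with
  | O => mid
  | S m' => mmul r X (mpow r X m')
  end.

Definition is_mexp (r : nat) (X E : mat) : Prop :=
  forall i j, (i < r)%nat -> (j < r)%nat ->
    Un_cv (fun n => rsum (S n) (fun m => mpow r X m i j / INR (fact m))) (E i j).

Definition minor (A : mat) (j : nat) : mat :=
  fun i k => A (S i) (if Nat.ltb k j then k else S k).
Fixpoint det (n : nat) (A : mat) : R :=
  match n with
  | O => 1
  | S n' => rsum n (fun j => (-1) ^ j * A O j * det n' (minor A j))
  end.

(* T_k : paper's (i,j) entry (r-k-i+1) delta_{j,i+k}; 0-indexed: (r-k-i) delta_{j,i+k} *)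
Definition Tk (r k : nat) : mat :=
  fun i j => if Nat.eqb j (i + k) then INR r - INR k - INR i else 0.
Definition H1 (r : nat) : mat :=
  fun i j => / INR r * Tk r 0 i j - / 2 * mid i j.
Definition H2 (r : nat) : mat :=
  fun i j => mid i j - / INR r * Tk r 0 i j.

Definition in_lie (r : nat) (X : mat) : Prop :=
  exists (a1 a2 : R) (b : nat -> R),
    meq r X (fun i j => a1 * H1 r i j + a2 * H2 r i j
                        + rsum (r - 1) (fun k => b (S k) * Tk r (S k) i j)).

(* G = connected Lie subgroup of GL(r,R) with Lie algebra g, i.e. the subgroup
   generated by exp(g) (finite products of exponentials of elements of g;
   inverses are included since exp(X)^{-1} = exp(-X) with -X in g). *)
Inductive inG (r : nat) : mat -> Prop :=
  | inG_id : inG r mid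
  | inG_mul : forall X E A, in_lie r X -> is_mexp r X E -> inG r A ->
      inG r (mmul r E A).

(* Sub-Hankel matrix with coordinates y_1, ..., y_{r+1} (y : nat -> R, only the
   values at 1..r+1 matter): paper's (i,j) entry is y_{i+j-1} if i+j <= r+2. *)
Definition SH (r : nat) (y : nat -> R) : mat :=
  fun i j => if Nat.leb (i + j) r then y (i + j + 1)%nat else 0.

Definition rho (r : nat) (g A : mat) : mat := mmul r (mmul r g A) (mtr g).

Definition P1 (r : nat) (y : nat -> R) : R := det r (SH r y).
Definition P2 (r : nat) (y : nat -> R) : R := y (r + 1)%nat.

Definition orbit (r : nat) (y y' : nat -> R) : Prop :=
  exists g, inG r g /\ meq r (SH r y') (rho r g (SH r y)).

Definition SH_open (r : nat) (U : (nat -> R) -> Prop) : Prop :=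
  forall y, U y -> exists eps, 0 < eps /\
    forall y', (forall l, (1 <= l <= r + 1)%nat -> Rabs (y' l - y l) < eps) -> U y'.

(* Every element of G is upper triangular with positive diagonal, so rho(g) multiplies
   P1 = det by (det g)^2 and P2 = y_{r+1} by g_22 g_rr: an orbit stays inside one sign class
   of (P1, P2).  Conversely, exp(t T_k) fixes y_{r+1}, adds t (r - k) y_{r+1} to y_{r+1-k} and
   leaves the y_l with l > r + 1 - k alone, so running k = 1, ..., r - 1 kills y_2, ..., y_r.
   The torus exp(a I + b T_0) then rescales y_1 and y_{r+1} independently to +-1; at such a
   point P1 = y_1 times a nonzero cofactor, so each sign class is the orbit of one of the four
   points (+-1, 0, ..., 0, +-1).  These classes are open by continuity of det, and their union
   {P1 P2 <> 0} is dense, which identifies the singular set. *)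
From Stdlib Require Import Reals Lra Lia FunctionalExtensionality.
From mathcomp Require Import all_boot all_algebra.
From mathcomp Require Import perm Rstruct zify.
Set Implicit Arguments. Unset Strict Implicit. Unset Printing Implicit Defensive.
Import GRing.Theory Num.Theory.
Open Scope R_scope.

Lemma rsum_big n f : rsum n f = (\sum_(i < n) f i)%R.
Proof.
elim: n => [|n IH]; first by rewrite big_ord0.
by rewrite big_ord_recr /= IH.
Qed.

Lemma rsum_recr n f : rsum n.+1 f = rsum n f + f n.
Proof. by []. Qed.

Lemma rsum_recl n f : rsum n.+1 f = f 0%nat + rsum n (fun k => f k.+1).
Proof. by rewrite !rsum_big big_ord_recl. Qed.

Lemma eq_rsum n f g : (forall k, (k < n)%nat -> f k = g k) -> rsum n f = rsum n g.
Proof.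
elim: n => [|n IH] h //=.
by rewrite IH ?h // => k hk; apply: h; apply: ltnW.
Qed.

Lemma rsum_eq0 n f : (forall k, (k < n)%nat -> f k = 0) -> rsum n f = 0.
Proof.
move=> h; rewrite (eq_rsum (g := fun _ => 0)) //.
by elim: n {h} => [|n IH] //=; rewrite IH; lra.
Qed.

Lemma rsum_only n f i : (i < n)%nat -> (forall k, (k < n)%nat -> k <> i -> f k = 0) ->
  rsum n f = f i.
Proof.
move=> hi h; rewrite !rsum_big (bigD1 (Ordinal hi)) //= big1 ?addr0 // => k hk.
by apply: h => // e; move: hk; rewrite -val_eqE /= e eqxx.
Qed.

Lemma rsum_add n f g : rsum n (fun k => f k + g k) = rsum n f + rsum n g.
Proof. elim: n => [|n IH] /=; [lra| rewrite IH; lra]. Qed.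

Lemma rsum_mull n c f : c * rsum n f = rsum n (fun k => c * f k).
Proof. elim: n => [|n IH] /=; [lra| rewrite -IH; lra]. Qed.

Lemma rsum_mulr n c f : rsum n f * c = rsum n (fun k => f k * c).
Proof. elim: n => [|n IH] /=; [lra| rewrite -IH; lra]. Qed.

Lemma exchange_rsum n p (f : nat -> nat -> R) :
  rsum n (fun a => rsum p (f a)) = rsum p (fun m => rsum n (fun a => f a m)).
Proof.
rewrite !rsum_big; under eq_bigr do rewrite rsum_big.
by rewrite exchange_big /=; apply: eq_bigr => i _; rewrite rsum_big.
Qed.

Lemma rsum_trunc n N f : (n <= N)%nat ->
  (forall k, (n <= k)%nat -> (k < N)%nat -> f k = 0) -> rsum N f = rsum n f.
Proof.
move=> /subnK <- h; elim: (N - n)%nat h => [|p IH] h //.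
rewrite addSn rsum_recr IH ?h; [lra | lia | lia |].
by move=> k h1 h2; apply: h; lia.
Qed.

Lemma rsum_antidiagonal N (G : nat -> nat -> R) :
  rsum N (fun M => rsum M.+1 (fun m => G m (M - m)%nat)) =
  rsum N (fun m => rsum (N - m) (G m)).
Proof.
elim: N => [|N IH] //.
rewrite rsum_recr IH rsum_recr [RHS]rsum_recr subSnn.
rewrite (eq_rsum (f := fun m => rsum (N.+1 - m) (G m))
   (g := fun m => rsum (N - m) (G m) + G m (N - m)%nat)); last first.
  by move=> m hm; rewrite subSn ?rsum_recr //; lia.
rewrite rsum_add /= subnn /=; lra.
Qed.

Lemma rsum_Cauchy N (G : nat -> nat -> R) :
  (forall m m', (N <= m + m')%nat -> G m m' = 0) ->
  rsum N (fun m => rsum N (G m)) = rsum N (fun M => rsum M.+1 (fun m => G m (M - m)%nat)).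
Proof.
move=> h; rewrite rsum_antidiagonal; apply: eq_rsum => m hm.
by apply: rsum_trunc => [|k h1 h2]; [lia | apply: h; lia].
Qed.

Definition mx_of (n : nat) (A : mat) : 'M[R]_n := (\matrix_(i < n, j < n) A i j)%R.

Lemma mx_of_mul n A B : mx_of n (mmul n A B) = (mx_of n A *m mx_of n B)%R.
Proof.
apply/matrixP => i j; rewrite !mxE /mmul rsum_big; apply: eq_bigr => k _.
by rewrite !mxE.
Qed.

Lemma mx_of_tr n A : mx_of n (mtr A) = (mx_of n A)^T%R.
Proof. by apply/matrixP => i j; rewrite !mxE. Qed.

Lemma mx_of_id n : mx_of n mid = 1%:M%R.
Proof.
apply/matrixP => i j; rewrite !mxE /mid.
case: (Nat.eqb_spec i j) => [/val_inj -> | h]; first by rewrite eqxx.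
by case: eqP => // e; case: h; rewrite e.
Qed.

Lemma meq_mx_of n A B : meq n A B <-> mx_of n A = mx_of n B.
Proof.
split=> [h | h i j /ssrnat.ltP hi /ssrnat.ltP hj].
  by apply/matrixP => i j; rewrite !mxE; apply: h; apply/ssrnat.ltP.
by have := congr1 (fun M : 'M_n => M (Ordinal hi) (Ordinal hj)) h; rewrite !mxE.
Qed.

Lemma mx_of_rho n g A : mx_of n (rho n g A) = (mx_of n g *m mx_of n A *m (mx_of n g)^T)%R.
Proof. by rewrite /rho !mx_of_mul mx_of_tr. Qed.

Lemma rho_entry r g A i j :
  rho r g A i j = rsum r (fun a => g i a * rsum r (fun b => A a b * g j b)).
Proof.
rewrite /rho /mmul /mtr.
rewrite (eq_rsum (g := fun b => rsum r (fun a => g i a * A a b * g j b))); last first.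
  by move=> b hb; rewrite rsum_mulr.
rewrite -exchange_rsum; apply: eq_rsum => a ha; rewrite rsum_mull.
by apply: eq_rsum => b hb; ring.
Qed.

Lemma det_mx_of n A : det n A = (\det (mx_of n A))%R.
Proof.
elim: n A => [|n IH] A; first by rewrite det_mx00.
rewrite (expand_det_row _ ord0) /det -/det rsum_big.
apply: eq_bigr => j _.
rewrite IH /cofactor !mxE add0n.
have -> : mx_of n (minor A j) = row' ord0 (col' j (mx_of n.+1 A)).
  apply/matrixP => k l; rewrite !mxE /minor /=.
  congr (A _ _); rewrite /bump.
  case: (Nat.ltb_spec l j) => h.
    by have /ssrnat.ltP h' := h; rewrite leqNgt h' add0n.
  by have /ssrnat.leP h' := h; rewrite h' add1n.
by rewrite !RmultE RpowE /= [RHS]mulrCA mulrA.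
Qed.

Definition upper_triangular (n : nat) (A : mat) :=
  forall i j, (j < i)%nat -> (i < n)%nat -> A i j = 0.

Lemma upper_triangular_mid n : upper_triangular n mid.
Proof. by move=> i j hji _; rewrite /mid; case: (Nat.eqb_spec i j) => // e; lia. Qed.

Lemma upper_triangular_mmul n A B :
  upper_triangular n A -> upper_triangular n B -> upper_triangular n (mmul n A B).
Proof.
move=> hA hB i j hji hi; rewrite /mmul; apply: rsum_eq0 => k hk.
case: (ltnP k i) => hki; first by rewrite hA //; lra.
by rewrite (hB k j) ?(leq_trans hji hki) //; lra.
Qed.

Lemma mmul_diag_upper n A B i : (i < n)%nat ->
  upper_triangular n A -> upper_triangular n B -> mmul n A B i i = A i i * B i i.
Proof.
move=> hi hA hB; rewrite /mmul (rsum_only hi) // => k hk hne.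
case: (ltngtP k i) => hki; [rewrite hA // | rewrite (hB k i) // | done]; lra.
Qed.

Lemma upper_triangular_mpow n X m : upper_triangular n X -> upper_triangular n (mpow n X m).
Proof.
move=> hX; elim: m => [|m IH] /=; [exact: upper_triangular_mid | exact: upper_triangular_mmul].
Qed.

Lemma mpow_diag_upper n X m i : (i < n)%nat -> upper_triangular n X -> mpow n X m i i = X i i ^ m.
Proof.
move=> hi hX; elim: m => [|m IH] /=; first by rewrite /mid Nat.eqb_refl.
by rewrite mmul_diag_upper // ?IH //; apply: upper_triangular_mpow.
Qed.

Lemma det_upper_gt0 n g : upper_triangular n g -> (forall i, (i < n)%nat -> 0 < g i i) ->
  0 < det n g.
Proof.
move=> hU hd; rewrite det_mx_of -det_tr det_trig.
  by apply/RltP; apply: prodr_gt0 => i _; rewrite !mxE; apply/RltP; exact: hd.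
by apply/is_trig_mxP => i j hij; rewrite !mxE; exact: hU.
Qed.

Lemma exp_partial_sums a :
  Un_cv (fun n => rsum n.+1 (fun m => a ^ m / INR (Factorial.fact m))) (exp a).
Proof.
have -> : (fun n => rsum n.+1 (fun m => a ^ m / INR (Factorial.fact m))) = E1 a.
  apply: functional_extensionality => n; rewrite /E1.
  elim: n => [|n IH] /=; first lra.
  by rewrite -IH /=; lra.
exact: E1_cvg.
Qed.

Lemma Un_cv_0 : Un_cv (fun _ => 0) 0.
Proof. by move=> e he; exists 0%nat => n _; rewrite /R_dist Rminus_diag Rabs_R0. Qed.

Lemma mexp_entry_pow r X E i j a : is_mexp r X E -> (i < r)%nat -> (j < r)%nat ->
  (forall m, mpow r X m i j = a ^ m) -> E i j = exp a.
Proof.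
move=> hE /ssrnat.ltP hi /ssrnat.ltP hj hX.
apply: (UL_sequence _ _ _ (hE i j hi hj)).
have -> : (fun n => rsum n.+1 (fun m => mpow r X m i j / INR (Factorial.fact m))) =
          (fun n => rsum n.+1 (fun m => a ^ m / INR (Factorial.fact m))).
  by apply: functional_extensionality => n; apply: eq_rsum => m _; rewrite hX.
exact: exp_partial_sums.
Qed.

Lemma mexp_entry_0 r X E i j : is_mexp r X E -> (i < r)%nat -> (j < r)%nat ->
  (forall m, mpow r X m i j = 0) -> E i j = 0.
Proof.
move=> hE /ssrnat.ltP hi /ssrnat.ltP hj hX.
apply: (UL_sequence _ _ _ (hE i j hi hj)).
have -> : (fun n => rsum n.+1 (fun m => mpow r X m i j / INR (Factorial.fact m))) = (fun _ => 0).
  by apply: functional_extensionality => n; apply: rsum_eq0 => m _; rewrite hX /Rdiv; lra.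
exact: Un_cv_0.
Qed.

Lemma mexp_upper_triangular n X E : upper_triangular n X -> is_mexp n X E ->
  upper_triangular n E /\ (forall i, (i < n)%nat -> E i i = exp (X i i)).
Proof.
move=> hX hE; split => [i j hji hi | i hi].
  by apply: (mexp_entry_0 hE) => // [|m]; [lia | rewrite upper_triangular_mpow].
by apply: (mexp_entry_pow hE) => // m; rewrite mpow_diag_upper.
Qed.

Lemma in_lie_upper_triangular r X : in_lie r X -> upper_triangular r X.
Proof.
move=> [a1 [a2 [b h]]] i j hji hi.
rewrite h; [| exact/ssrnat.ltP | apply/ssrnat.ltP; lia].
have hT k : Tk r k i j = 0 by rewrite /Tk; case: (Nat.eqb_spec j (i + k)) => // e; lia.
have hm : mid i j = 0 by rewrite /mid; case: (Nat.eqb_spec i j) => // e; lia.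
rewrite /H1 /H2 hm !hT rsum_eq0 => [|k _]; last rewrite hT; lra.
Qed.

Lemma inG_upper_triangular r g : inG r g ->
  upper_triangular r g /\ (forall i, (i < r)%nat -> 0 < g i i).
Proof.
elim => [|X E A hX hE _ [hA hA']].
  split=> [|i _]; first exact: upper_triangular_mid.
  by rewrite /mid Nat.eqb_refl; lra.
have [hEU hEd] := mexp_upper_triangular (in_lie_upper_triangular hX) hE.
split=> [|i hi]; first exact: upper_triangular_mmul.
by rewrite mmul_diag_upper // hEd //; apply: Rmult_lt_0_compat; [exact: exp_pos | exact: hA'].
Qed.

Lemma inG_det_gt0 r g : inG r g -> 0 < det r g.
Proof. by move=> /inG_upper_triangular [hU hd]; exact: det_upper_gt0. Qed.

Lemma SH_val r y i j : (i + j <= r)%nat -> SH r y i j = y (i + j + 1)%nat.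
Proof. by move=> h; rewrite /SH; case: (Nat.leb_spec (i + j) r) => //; lia. Qed.

Lemma SH_zero r y i j : (r < i + j)%nat -> SH r y i j = 0.
Proof. by move=> h; rewrite /SH; case: (Nat.leb_spec (i + j) r) => //; lia. Qed.

Lemma P1_rho r y y' g : meq r (SH r y') (rho r g (SH r y)) ->
  P1 r y' = det r g * det r g * P1 r y.
Proof.
move=> /meq_mx_of h; rewrite /P1 !det_mx_of h mx_of_rho !det_mulmx det_tr.
by rewrite !RmultE mulrAC.
Qed.

(* [P2] is the anti-diagonal entry in row 1, column r-1 (0-indexed); below that anti-diagonal
   [SH r y] vanishes, so only the diagonal entries of the triangular [g] contribute. *)
Lemma P2_rho r y y' g : (2 <= r)%nat -> upper_triangular r g ->
  meq r (SH r y') (rho r g (SH r y)) ->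
  P2 r y' = g 1%nat 1%nat * g (r - 1)%nat (r - 1)%nat * P2 r y.
Proof.
move=> hr hU h.
have e := h 1%nat (r - 1)%nat ltac:(lia) ltac:(lia).
rewrite SH_val in e; last lia.
rewrite (_ : (1 + (r - 1) + 1 = r + 1)%nat) in e; last lia.
rewrite /P2 e /rho /mmul (@rsum_only _ _ (r - 1)%nat); last first.
- by move=> k hk hne; rewrite /mtr hU; [lra | lia | lia].
- lia.
rewrite (@rsum_only _ _ 1%nat); last first.
- move=> k hk hne; case: (ltnP k 1) => hk1.
    by rewrite hU; [lra | lia | lia].
  by rewrite SH_zero; [lra | lia].
- lia.
rewrite /mtr SH_val; last lia.
have -> : (1 + (r - 1) + 1 = r + 1)%nat by lia.
change (y (r + 1)%coq_nat) with (y (r + 1)%N); lra.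
Qed.

Lemma orbit_scales_P1_P2 r y y' : (2 <= r)%nat -> orbit r y y' ->
  exists c d, 0 < c /\ 0 < d /\ P1 r y' = c * P1 r y /\ P2 r y' = d * P2 r y.
Proof.
move=> hr [g [hg h]].
have [hU hd] := inG_upper_triangular hg.
have hp := inG_det_gt0 hg.
exists (det r g * det r g), (g 1%nat 1%nat * g (r - 1)%nat (r - 1)%nat).
split; first nra.
split; first by apply: Rmult_lt_0_compat; apply: hd; lia.
by split; [exact: P1_rho | exact: P2_rho].
Qed.

Fixpoint falling (h x : R) (m : nat) : R :=
  match m with O => 1 | S m' => falling h x m' * (x - INR m' * h) end.

Lemma fallingS h x m : falling h x m.+1 = x * falling h (x - h) m.
Proof.
elim: m => [|m IH]; first by rewrite /=; lra.
rewrite -[falling h x m.+2]/(falling h x m.+1 * (x - INR m.+1 * h)) IH.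
rewrite -[falling h (x - h) m.+1]/(falling h (x - h) m * (x - h - INR m * h)) S_INR; lra.
Qed.

Lemma falling_add h x m p : falling h x (m + p) = falling h x m * falling h (x - INR m * h) p.
Proof.
elim: p => [|p IH]; first by rewrite addn0 /=; lra.
by rewrite addnS /= IH plus_INR; lra.
Qed.

Lemma falling_eq0 h x m l : (l < m)%nat -> x = INR l * h -> falling h x m = 0.
Proof.
elim: m => [|m IH] // hl hx /=.
case: (ltnP l m) => h'; first by rewrite IH //; lra.
have e : l = m by lia.
by rewrite hx e; lra.
Qed.

Lemma falling0 x m : falling 0 x m = x ^ m.
Proof. by elim: m => [|m IH] //=; rewrite IH; ring. Qed.

(* [gbinom h x m = x (x - h) ... (x - (m - 1) h) / m!]: the binomial coefficient for
   [h = 1], the Taylor coefficient [x ^ m / m!] for [h = 0]. *)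
Definition gbinom (h x : R) (m : nat) : R := falling h x m / INR (Factorial.fact m).

Lemma INR_fact_gt0 m : 0 < INR (Factorial.fact m).
Proof. by apply: lt_0_INR; apply/ssrnat.ltP; have /ssrnat.ltP := Factorial.lt_O_fact m. Qed.

Lemma gbinom0 h x : gbinom h x 0 = 1.
Proof. by rewrite /gbinom /=; lra. Qed.

Lemma gbinomS h x m : INR m.+1 * gbinom h x m.+1 = (x - INR m * h) * gbinom h x m.
Proof.
rewrite /gbinom (_ : Factorial.fact m.+1 = (m.+1 * Factorial.fact m)%coq_nat) // mult_INR.
rewrite -[falling h x m.+1]/(falling h x m * (x - INR m * h)).
have h1 := INR_fact_gt0 m.
have h2 : INR m.+1 <> 0 by apply: not_0_INR.
by field; split; lra.
Qed.

Lemma gbinom_pow x m : gbinom 0 x m = x ^ m / INR (Factorial.fact m).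
Proof. by rewrite /gbinom falling0. Qed.

(* Induction on [M] after multiplying by [M + 1 = m + (M + 1 - m)]: each of the two pieces
   is lowered by [gbinomS], as in Pascal's rule. *)
Lemma gbinom_Vandermonde h a b M :
  rsum M.+1 (fun m => gbinom h a m * gbinom h b (M - m)) = gbinom h (a + b) M.
Proof.
elim: M => [|M IH]; first by rewrite /= !gbinom0; lra.
apply: (Rmult_eq_reg_l (INR M.+1)); last exact: not_0_INR.
rewrite gbinomS -IH rsum_mull.
rewrite (eq_rsum (g := fun m => INR m * gbinom h a m * gbinom h b (M.+1 - m)
     + gbinom h a m * (INR (M.+1 - m) * gbinom h b (M.+1 - m)))); last first.
  by move=> m hm; rewrite minus_INR; [ring | apply/ssrnat.leP; lia].
rewrite rsum_add.
have hA : rsum M.+2 (fun m => INR m * gbinom h a m * gbinom h b (M.+1 - m)) =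
    rsum M.+1 (fun m => (a - INR m * h) * gbinom h a m * gbinom h b (M - m)).
  rewrite rsum_recl (_ : INR 0 = 0) // !Rmult_0_l Rplus_0_l.
  by apply: eq_rsum => m hm; rewrite -gbinomS subSS.
have hB : rsum M.+2 (fun m => gbinom h a m * (INR (M.+1 - m) * gbinom h b (M.+1 - m))) =
    rsum M.+1 (fun m => gbinom h a m * ((b - INR (M - m) * h) * gbinom h b (M - m))).
  rewrite rsum_recr subnn (_ : INR 0 = 0) // Rmult_0_l Rmult_0_r Rplus_0_r.
  apply: eq_rsum => m hm; have -> : (M.+1 - m = (M - m).+1)%nat by lia.
  by rewrite gbinomS.
rewrite hA hB -rsum_add rsum_mull; apply: eq_rsum => m hm.
by rewrite minus_INR; [ring | apply/ssrnat.leP; lia].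
Qed.

Section ExpTk.
Variables (r k : nat).
Hypothesis k_gt0 : (0 < k)%nat.

Definition expTk_coef (t : R) (i m : nat) : R :=
  t ^ m * gbinom (INR k) (INR r - INR k - INR i) m.

(* [T_k] shifts by [k] columns, so [(t T_k)^m] is supported on [j = i + m k], where it is
   [t^m] times a falling factorial: the exponential series of [t T_k] is a finite sum. *)
Definition expTk (t : R) : mat := fun i j =>
  rsum r (fun m => if Nat.eqb j (i + m * k)%nat then expTk_coef t i m else 0).

Lemma in_lie_scaled_Tk t : (k <= r - 1)%nat -> in_lie r (fun i j => t * Tk r k i j).
Proof.
move=> hkr; exists 0, 0, (fun n => if Nat.eqb n k then t else 0) => i j hi hj.
rewrite (@rsum_only _ _ (k - 1)%nat); last first.
- by move=> l hl hne; case: (Nat.eqb_spec l.+1 k) => e; [lia | lra].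
- lia.
by rewrite (_ : (k - 1).+1 = k) ?Nat.eqb_refl; [lra | lia].
Qed.

Lemma mpow_scaled_Tk t m i j : (i < r)%nat -> (j < r)%nat ->
  mpow r (fun i j => t * Tk r k i j) m i j =
  if Nat.eqb j (i + m * k)%nat then t ^ m * falling (INR k) (INR r - INR k - INR i) m else 0.
Proof.
move=> hi hj; elim: m i hi => [|m IH] i hi.
  rewrite /= /mid; case: (Nat.eqb_spec i j); case: (Nat.eqb_spec j (i + 0 * k)%nat);
    by [lia | lra].
rewrite [mpow _ _ _]/= /mmul /Tk.
case: (ltnP (i + k) r) => hik; last first.
  rewrite rsum_eq0 => [|a ha]; last by case: (Nat.eqb_spec a (i + k)) => e; [lia | lra].
  case: (Nat.eqb_spec j (i + m.+1 * k)) => e //.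
  have : (i + k <= j)%nat by rewrite e mulSn addnA leq_addr.
  lia.
rewrite (@rsum_only _ _ (i + k)%nat) //; last first.
  by move=> a ha hne; case: (Nat.eqb_spec a (i + k)) => e; [lia | lra].
rewrite Nat.eqb_refl IH // mulSn addnA.
case: (Nat.eqb_spec j (i + k + m * k)) => _; last lra.
rewrite fallingS plus_INR /=.
have -> : INR r - INR k - (INR i + INR k) = INR r - INR k - INR i - INR k by ring.
ring.
Qed.

Lemma is_mexp_expTk t : is_mexp r (fun i j => t * Tk r k i j) (expTk t).
Proof.
move=> i j /ssrnat.ltP hi /ssrnat.ltP hj e he; exists r => n /ssrnat.leP hn.
rewrite (@rsum_trunc r n.+1); last first.
- move=> m h1 h2; rewrite mpow_scaled_Tk //.
  case: (Nat.eqb_spec j (i + m * k)) => e'; last by rewrite /Rdiv; lra.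
  have : (m <= m * k)%nat by rewrite leq_pmulr.
  lia.
- lia.
rewrite (eq_rsum (g := fun m => if Nat.eqb j (i + m * k)%nat then expTk_coef t i m else 0)).
  by rewrite /R_dist /expTk Rminus_diag Rabs_R0.
move=> m hm; rewrite mpow_scaled_Tk //.
case: (Nat.eqb_spec j (i + m * k)) => _; last by rewrite /Rdiv; lra.
by rewrite /expTk_coef /gbinom /Rdiv; ring.
Qed.

Lemma expTk_row_sum s i (F : nat -> R) : (i < r)%nat ->
  rsum r (fun a => expTk s i a * F a) =
  rsum r.+1 (fun m => if Nat.ltb (i + m * k) r then expTk_coef s i m * F (i + m * k)%nat else 0).
Proof.
move=> hi.
rewrite (eq_rsum (g := fun a => rsum r (fun m =>
    (if Nat.eqb a (i + m * k)%nat then expTk_coef s i m else 0) * F a))); last first.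
  by move=> a ha; rewrite /expTk rsum_mulr.
rewrite exchange_rsum rsum_recr.
have -> : Nat.ltb (i + r * k) r = false.
  apply/Nat.ltb_ge; have : (r <= r * k)%nat by rewrite leq_pmulr.
  move/ssrnat.leP; lia.
rewrite Rplus_0_r; apply: eq_rsum => m hm.
case: (Nat.ltb_spec (i + m * k) r) => h.
  rewrite (@rsum_only _ _ (i + m * k)%nat) ?Nat.eqb_refl //; first by apply/ssrnat.ltP.
  by move=> a ha hne; case: (Nat.eqb_spec a (i + m * k)) => e; [lia | lra].
by apply: rsum_eq0 => a ha; case: (Nat.eqb_spec a (i + m * k)) => e; [lia | lra].
Qed.

(* The factor [r - k - i - (m - 1) k] of the falling factorial vanishes at the boundary. *)
Lemma expTk_coef_boundary s i m : (i < r)%nat -> (i + m * k)%nat = r -> expTk_coef s i m = 0.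
Proof.
move=> hi e; have hm : (1 <= m)%nat by case: m e => [|m] e //; lia.
rewrite /expTk_coef /gbinom (@falling_eq0 _ _ m (m - 1)%nat); first by rewrite /Rdiv; ring.
  lia.
rewrite -e plus_INR mult_INR minus_INR /=; [lra | exact/ssrnat.leP].
Qed.

Lemma expTk_guard s i m Z : (i < r)%nat -> ((r < i + m * k)%nat -> Z = 0) ->
  (if Nat.ltb (i + m * k) r then expTk_coef s i m * Z else 0) = expTk_coef s i m * Z.
Proof.
move=> hi hZ; case: (Nat.ltb_spec (i + m * k) r) => h //.
case: (ltnP r (i + m * k)) => h2; first by rewrite hZ //; lra.
by rewrite expTk_coef_boundary //; [lra | lia].
Qed.

Lemma rho_expTk_entry s A i j : (i < r)%nat -> (j < r)%nat ->
  (forall a b, (r < a + b)%nat -> A a b = 0) ->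
  rho r (expTk s) A i j = rsum r.+1 (fun m => rsum r.+1 (fun m' =>
    expTk_coef s i m * expTk_coef s j m' * A (i + m * k)%nat (j + m' * k)%nat)).
Proof.
move=> hi hj hA; rewrite rho_entry expTk_row_sum //; apply: eq_rsum => m hm.
rewrite (eq_rsum (f := fun b => A (i + m * k)%nat b * expTk s j b)
   (g := fun b => expTk s j b * A (i + m * k)%nat b)); last by move=> *; ring.
rewrite expTk_row_sum // expTk_guard //; last first.
  move=> h; apply: rsum_eq0 => m' hm'.
  by case: (Nat.ltb_spec (j + m' * k) r) => _; [rewrite hA; [ring | lia] | lra].
rewrite rsum_mull; apply: eq_rsum => m' hm'.
by rewrite expTk_guard // => [|h]; [ring | apply: hA; lia].
Qed.

Definition expTk_coord (s : R) (y : nat -> R) (q : nat) : R :=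
  rsum r.+1 (fun M => if Nat.leb (q + M * k) r then
     y (q + M * k + 1)%nat * s ^ M * gbinom (INR k) (2 * INR r - 2 * INR k - INR q) M else 0).

Lemma rho_expTk_SH_entry s y i j : (i < r)%nat -> (j < r)%nat ->
  rho r (expTk s) (SH r y) i j = expTk_coord s y (i + j).
Proof.
move=> hi hj; rewrite rho_expTk_entry // => [|a b]; last exact: SH_zero.
have shift_add m M : (m <= M)%nat -> (i + m * k + (j + (M - m) * k) = i + j + M * k)%nat.
  move=> h; have : (m * k <= M * k)%nat by rewrite leq_mul2r h orbT.
  by rewrite mulnBl; lia.
rewrite rsum_Cauchy => [|m m' h]; last first.
  rewrite SH_zero; first ring.
  have : (r.+1 <= (m + m') * k)%nat by rewrite (leq_trans h) // leq_pmulr.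
  by rewrite mulnDl; lia.
apply: eq_rsum => M hM.
case: (Nat.leb_spec (i + j + M * k) r) => h; last first.
  by apply: rsum_eq0 => m hm; rewrite SH_zero ?shift_add; [ring | lia | lia].
rewrite (eq_rsum (g := fun m => y (i + j + M * k + 1)%nat * s ^ M *
    (gbinom (INR k) (INR r - INR k - INR i) m *
     gbinom (INR k) (INR r - INR k - INR j) (M - m)))); last first.
  move=> m hm; rewrite SH_val shift_add; try lia.
  rewrite /expTk_coef (_ : s ^ M = s ^ m * s ^ (M - m)); first ring.
  by rewrite -pow_add; congr (_ ^ _); lia.
by rewrite -rsum_mull gbinom_Vandermonde plus_INR; congr (_ * _ * gbinom _ _ _); ring.
Qed.

Lemma expTk_coord_gt s y q : (r < q)%nat -> expTk_coord s y q = 0.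
Proof.
move=> h; apply: rsum_eq0 => M hM.
by case: (Nat.leb_spec (q + M * k) r) => h2 //; lia.
Qed.

Lemma rho_expTk_SH s y :
  meq r (rho r (expTk s) (SH r y)) (SH r (fun l => expTk_coord s y (l - 1)%nat)).
Proof.
move=> i j /ssrnat.ltP hi /ssrnat.ltP hj; rewrite rho_expTk_SH_entry // /SH.
case: (Nat.leb_spec (i + j) r) => h; last by rewrite expTk_coord_gt //; lia.
by have -> : (i + j + 1 - 1 = i + j)%nat by lia.
Qed.

Lemma expTk_coord_top s y q : (r - k < q)%nat -> (q <= r)%nat -> expTk_coord s y q = y (q + 1)%nat.
Proof.
move=> h1 h2; rewrite /expTk_coord rsum_recl rsum_eq0 => [|M hM].
  rewrite mul0n addn0; case: (Nat.leb_spec q r) => h; last lia.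
  by rewrite /gbinom /=; lra.
case: (Nat.leb_spec (q + M.+1 * k) r) => h //.
have : (k <= M.+1 * k)%nat by rewrite leq_pmull.
lia.
Qed.

Lemma expTk_coord_next s y : (k <= r)%nat ->
  expTk_coord s y (r - k)%nat = y (r - k + 1)%nat + y (r + 1)%nat * s * (INR r - INR k).
Proof.
move=> hkr; rewrite /expTk_coord (@rsum_trunc 2); last first.
- move=> M h1 h2; case: (Nat.leb_spec (r - k + M * k) r) => h //.
  have : (2 * k <= M * k)%nat by rewrite leq_mul2r; lia.
  lia.
- lia.
rewrite /= mul0n addn0 mul1n.
case: (Nat.leb_spec (r - k) r) => h; last lia.
case: (Nat.leb_spec (r - k + k) r) => h'; last lia.
have -> : (r - k + k + 1 = r + 1)%nat by lia.
by rewrite /gbinom /= minus_INR; [field | apply/ssrnat.leP].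
Qed.

Lemma expTk_coef_mul s t i m M : (m <= M)%nat ->
  expTk_coef s i m * expTk_coef t (i + m * k) (M - m) =
  falling (INR k) (INR r - INR k - INR i) M * (gbinom 0 s m * gbinom 0 t (M - m)).
Proof.
move=> hm; have hsplit := falling_add (INR k) (INR r - INR k - INR i) m (M - m).
rewrite (_ : (m + (M - m) = M)%nat) in hsplit; last lia.
rewrite hsplit /expTk_coef !gbinom_pow /gbinom plus_INR mult_INR.
have -> : INR r - INR k - (INR i + INR m * INR k) = INR r - INR k - INR i - INR m * INR k by ring.
have h1 := INR_fact_gt0 m; have h2 := INR_fact_gt0 (M - m).
by field; lra.
Qed.

Lemma mmul_expTk s t : meq r (mmul r (expTk s) (expTk t)) (expTk (s + t)).
Proof.
move=> i j /ssrnat.ltP hi /ssrnat.ltP hj; rewrite /mmul expTk_row_sum //.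
rewrite (eq_rsum (g := fun m => rsum r.+1 (fun m' => if Nat.eqb j (i + (m + m') * k)%nat
    then expTk_coef s i m * expTk_coef t (i + m * k) m' else 0))); last first.
  move=> m hm; rewrite expTk_guard //; last first.
    move=> h; apply: rsum_eq0 => m' hm'.
    by case: (Nat.eqb_spec j (i + m * k + m' * k)) => e; [lia | lra].
  rewrite /expTk rsum_mull rsum_recr.
  have -> : Nat.eqb j (i + (m + r) * k)%nat = false.
    apply/Nat.eqb_neq; have : (r <= r * k)%nat by rewrite leq_pmulr.
    by rewrite mulnDl; lia.
  rewrite Rplus_0_r; apply: eq_rsum => m' hm'; rewrite mulnDl addnA.
  by case: (Nat.eqb_spec j (i + m * k + m' * k)) => _; lra.
rewrite rsum_Cauchy => [|m m' h]; last first.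
  case: (Nat.eqb_spec j (i + (m + m') * k)) => e //.
  have : (r.+1 <= (m + m') * k)%nat by rewrite (leq_trans h) // leq_pmulr.
  lia.
rewrite (eq_rsum (g := fun M => if Nat.eqb j (i + M * k)%nat then expTk_coef (s + t) i M else 0)).
  rewrite rsum_recr /expTk.
  have -> : Nat.eqb j (i + r * k)%nat = false.
    apply/Nat.eqb_neq; have : (r <= r * k)%nat by rewrite leq_pmulr.
    lia.
  by rewrite Rplus_0_r.
move=> M hM.
rewrite (eq_rsum (g := fun m => if Nat.eqb j (i + M * k)%nat then
    falling (INR k) (INR r - INR k - INR i) M * (gbinom 0 s m * gbinom 0 t (M - m)) else 0));
  last by move=> m hm; rewrite (_ : (m + (M - m) = M)%nat) ?expTk_coef_mul //; lia.
case: (Nat.eqb_spec j (i + M * k)) => _; last by apply: rsum_eq0.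
by rewrite -rsum_mull gbinom_Vandermonde /expTk_coef !gbinom_pow /gbinom /Rdiv; ring.
Qed.

Lemma expTk0 : meq r (expTk 0) mid.
Proof.
move=> i j /ssrnat.ltP hi /ssrnat.ltP hj; rewrite /expTk.
case: r hi => [|r'] // hi; rewrite rsum_recl rsum_eq0 => [|m hm].
  by rewrite mul0n addn0 /mid Nat.eqb_sym /expTk_coef gbinom0; case: (Nat.eqb _ _); lra.
by case: (Nat.eqb _ _) => //; rewrite /expTk_coef /=; lra.
Qed.

Lemma expTk_inv s : (mx_of r (expTk (- s)) *m mx_of r (expTk s) = 1%:M)%R.
Proof.
rewrite -mx_of_mul -mx_of_id; apply/meq_mx_of => i j hi hj.
by rewrite mmul_expTk // Rplus_opp_l expTk0.
Qed.

End ExpTk.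

Section ExpDiag.
Variables (r : nat) (a b : R).

(* [a I + b T_0]: the diagonal of [T_0] is [r - i] (0-indexed). *)
Definition diag_lie : mat := fun i j => if Nat.eqb i j then a + b * (INR r - INR i) else 0.
Definition expD : mat := fun i j => if Nat.eqb i j then exp (a + b * (INR r - INR i)) else 0.

Lemma in_lie_diag : (0 < r)%nat -> in_lie r diag_lie.
Proof.
move=> hr; exists (2 * (a + b * INR r)), (2 * a + b * INR r), (fun _ => 0) => i j hi hj.
rewrite rsum_eq0 => [|*]; last lra.
have hr' : INR r <> 0 by apply: not_0_INR; lia.
rewrite /diag_lie /H1 /H2 /Tk /mid (_ : INR 0 = 0) //.
case: (Nat.eqb_spec i j); case: (Nat.eqb_spec j (i + 0)) => *; [field; lra | lia | lia | lra].
Qed.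

Lemma mpow_diag_lie m i j : (i < r)%nat ->
  mpow r diag_lie m i j = if Nat.eqb i j then (a + b * (INR r - INR i)) ^ m else 0.
Proof.
move=> hi; elim: m i hi => [|m IH] i hi /=; first by rewrite /mid; case: (Nat.eqb_spec i j).
rewrite /mmul (@rsum_only _ _ i) // => [|l hl hne]; last first.
  by rewrite /diag_lie; case: (Nat.eqb_spec i l) => e; [lia | lra].
by rewrite IH // /diag_lie Nat.eqb_refl; case: (Nat.eqb_spec i j) => _; ring.
Qed.

Lemma is_mexp_expD : is_mexp r diag_lie expD.
Proof.
move=> i j /ssrnat.ltP hi /ssrnat.ltP hj.
rewrite /expD; case: (Nat.eqb_spec i j) => [<- | nij].
  have -> : (fun n => rsum n.+1 (fun m => mpow r diag_lie m i i / INR (Factorial.fact m))) =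
     (fun n => rsum n.+1 (fun m => (a + b * (INR r - INR i)) ^ m / INR (Factorial.fact m))).
    apply: functional_extensionality => n; apply: eq_rsum => m _.
    by rewrite mpow_diag_lie // Nat.eqb_refl.
  exact: exp_partial_sums.
have -> : (fun n => rsum n.+1 (fun m => mpow r diag_lie m i j / INR (Factorial.fact m))) =
   (fun _ => 0).
  apply: functional_extensionality => n; apply: rsum_eq0 => m _.
  by rewrite mpow_diag_lie //; case: (Nat.eqb_spec i j) => // _; rewrite /Rdiv; lra.
exact: Un_cv_0.
Qed.

Definition expD_coord (y : nat -> R) : nat -> R :=
  fun l => exp (2 * a + b * (2 * INR r - INR (l - 1))) * y l.

Lemma rho_expD_SH y : meq r (rho r expD (SH r y)) (SH r (expD_coord y)).
Proof.
move=> i j /ssrnat.ltP hi /ssrnat.ltP hj.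
rewrite rho_entry (@rsum_only _ _ i) // => [|l hl hne]; last first.
  by rewrite /expD; case: (Nat.eqb_spec i l) => e; [lia | lra].
rewrite (@rsum_only _ _ j) // => [|l hl hne]; last first.
  by rewrite /expD; case: (Nat.eqb_spec j l) => e; [lia | lra].
rewrite /expD !Nat.eqb_refl /SH /expD_coord.
case: (Nat.leb_spec (i + j) r) => h; last lra.
rewrite (_ : (i + j + 1 - 1 = i + j)%nat) ?plus_INR; last lia.
rewrite (_ : exp (2 * a + b * (2 * INR r - (INR i + INR j))) =
  exp (a + b * (INR r - INR i)) * exp (a + b * (INR r - INR j))); first ring.
by rewrite -exp_plus; congr exp; ring.
Qed.

End ExpDiag.

Lemma expD_inv r a b : (mx_of r (expD r (- a) (- b)) *m mx_of r (expD r a b) = 1%:M)%R.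
Proof.
rewrite -mx_of_mul -mx_of_id; apply/meq_mx_of => i j /ssrnat.ltP hi /ssrnat.ltP hj.
rewrite /mmul (@rsum_only _ _ i) // => [|l hl hne]; last first.
  by rewrite /expD; case: (Nat.eqb_spec i l) => e; [lia | lra].
rewrite /expD /mid Nat.eqb_refl; case: (Nat.eqb_spec i j) => e; last lra.
by rewrite -exp_plus -[RHS]exp_0; congr exp; ring.
Qed.

Definition generator r (g : mat) : Prop :=
  (exists k t, (0 < k)%nat /\ (k <= r - 1)%nat /\ g = expTk r k t) \/
  (exists a b, g = expD r a b).

Inductive generated (r : nat) : mat -> Prop :=
  | generated_id : generated r mid
  | generated_mul : forall g A, generator r g -> generated r A -> generated r (mmul r g A).

Lemma generated_inG r g : (0 < r)%nat -> generated r g -> inG r g.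
Proof.
move=> hr; elim => [|g0 A hg _ IH]; first exact: inG_id.
case: hg => [[k [t [hk [hkr ->]]]]|[a [b ->]]].
  apply: (@inG_mul r (fun i j => t * Tk r k i j)) => //.
  - exact: in_lie_scaled_Tk.
  - exact: is_mexp_expTk.
apply: (@inG_mul r (diag_lie r a b)) => //; [exact: in_lie_diag | exact: is_mexp_expD].
Qed.

Lemma generator_inv r g : generator r g ->
  exists h, generator r h /\ (mx_of r h *m mx_of r g = 1%:M)%R.
Proof.
case => [[k [t [hk [hkr ->]]]]|[a [b ->]]].
  exists (expTk r k (- t)); split; [by left; exists k, (- t) | exact: expTk_inv].
exists (expD r (- a) (- b)); split; [by right; exists (- a), (- b) | exact: expD_inv].
Qed.

Lemma generated_mulmx r g h : generated r g -> generated r h ->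
  exists p, generated r p /\ mx_of r p = (mx_of r g *m mx_of r h)%R.
Proof.
move=> hg hh; elim: hg => [|g0 A hg0 _ [p [hp ep]]].
  by exists h; split => //; rewrite mx_of_id mul1mx.
exists (mmul r g0 p); split; first exact: generated_mul.
by rewrite !mx_of_mul ep mulmxA.
Qed.

Lemma generated_inv r g : generated r g ->
  exists q, generated r q /\ (mx_of r q *m mx_of r g = 1%:M)%R.
Proof.
elim => [|g0 A hg0 _ [q [hq eq]]].
  by exists mid; split; [exact: generated_id | rewrite mx_of_id mul1mx].
have [h0 [hh0 eh0]] := generator_inv hg0.
have [p [hp ep]] := generated_mulmx hq (generated_mul hh0 (generated_id r)).
exists p; split => //.
by rewrite ep mx_of_mul mx_of_id mulmx1 mx_of_mul mulmxA -(mulmxA (mx_of r q)) eh0 mulmx1.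
Qed.

Definition gen_orbit r y y' := exists g, generated r g /\ meq r (SH r y') (rho r g (SH r y)).

Lemma gen_orbit_refl r y : gen_orbit r y y.
Proof.
exists mid; split; first exact: generated_id.
by apply/meq_mx_of; rewrite mx_of_rho mx_of_id mul1mx trmx1 mulmx1.
Qed.

Lemma gen_orbit_trans r y y' y'' : gen_orbit r y y' -> gen_orbit r y' y'' -> gen_orbit r y y''.
Proof.
move=> [g [hg /meq_mx_of e]] [h [hh /meq_mx_of e']].
have [p [hp ep]] := generated_mulmx hh hg.
exists p; split => //; apply/meq_mx_of.
by rewrite e' mx_of_rho e mx_of_rho mx_of_rho ep trmx_mul !mulmxA.
Qed.

Lemma gen_orbit_sym r y y' : gen_orbit r y y' -> gen_orbit r y' y.
Proof.
move=> [g [hg /meq_mx_of e]].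
have [q [hq eq]] := generated_inv hg.
exists q; split => //; apply/meq_mx_of.
by rewrite mx_of_rho e mx_of_rho !mulmxA eq mul1mx -mulmxA -trmx_mul eq trmx1 mulmx1.
Qed.

Lemma gen_orbit_generator r g y y' : generator r g ->
  meq r (rho r g (SH r y)) (SH r y') -> gen_orbit r y y'.
Proof.
move=> hg /meq_mx_of e; exists (mmul r g mid); split.
  by apply: generated_mul => //; exact: generated_id.
by apply/meq_mx_of; rewrite -e !mx_of_rho mx_of_mul mx_of_id mulmx1.
Qed.

Lemma gen_orbit_orbit r y y' : (0 < r)%nat -> gen_orbit r y y' -> orbit r y y'.
Proof. by move=> hr [g [hg e]]; exists g; split => //; exact: generated_inG. Qed.

Lemma SH_eq r y y' : (forall l, (1 <= l)%nat -> (l <= r + 1)%nat -> y l = y' l) ->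
  SH r y = SH r y'.
Proof.
move=> h; apply: functional_extensionality => i; apply: functional_extensionality => j.
by rewrite /SH; case: (Nat.leb_spec (i + j) r) => hij //; rewrite h //; lia.
Qed.

Lemma gen_orbit_kill_coord r y k : (2 <= r)%nat -> (0 < k)%nat -> (k <= r - 1)%nat ->
  y (r + 1)%nat <> 0 ->
  exists y', gen_orbit r y y' /\ y' (r + 1)%nat = y (r + 1)%nat /\ y' (r - k + 1)%nat = 0 /\
    (forall l, (r - k + 1 < l)%nat -> (l <= r + 1)%nat -> y' l = y l).
Proof.
move=> hr hk hkr hy.
set t := - y (r - k + 1)%nat / (y (r + 1)%nat * (INR r - INR k)).
exists (fun l => expTk_coord r k t y (l - 1)%nat); split.
  by apply: (@gen_orbit_generator r (expTk r k t)); [left; exists k, t | exact: rho_expTk_SH].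
split; first by rewrite expTk_coord_top //; try lia; congr y; lia.
split.
  rewrite (_ : (r - k + 1 - 1 = r - k)%nat) ?expTk_coord_next; try lia.
  have : INR k < INR r by apply: lt_INR; apply/ssrnat.ltP; lia.
  by move=> hkr'; rewrite /t; field; split => //; lra.
by move=> l h1 h2; rewrite expTk_coord_top //; try lia; congr y; lia.
Qed.

Lemma gen_orbit_sparse r y : (2 <= r)%nat -> y (r + 1)%nat <> 0 ->
  exists w, gen_orbit r y w /\ w (r + 1)%nat = y (r + 1)%nat /\
    (forall l, (2 <= l)%nat -> (l <= r)%nat -> w l = 0).
Proof.
move=> hr hy.
have kill K : (K <= r - 1)%nat -> exists w, gen_orbit r y w /\ w (r + 1)%nat = y (r + 1)%nat /\
    (forall l, (r - K + 1 <= l)%nat -> (l <= r)%nat -> w l = 0).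
  elim: K => [|K IH] hK.
    by exists y; split; [exact: gen_orbit_refl | split => // l h1 h2; lia].
  have [y1 [h1 [e1 z1]]] := IH ltac:(lia).
  have hy1 : y1 (r + 1)%nat <> 0 by rewrite e1.
  have [y2 [h2 [e2 [z2 k2]]]] := @gen_orbit_kill_coord r y1 K.+1 hr ltac:(lia) hK hy1.
  exists y2; split; first exact: gen_orbit_trans h1 h2.
  split=> [|l hl1 hl2]; first by rewrite e2 e1.
  case: (ltnP (r - K.+1 + 1) l) => hl; first by rewrite k2 ?z1 //; lia.
  by have -> : l = (r - K.+1 + 1)%nat by lia.
have [w [hw [ew zw]]] := kill (r - 1)%nat (leqnn _).
by exists w; split => //; split => // l h1 h2; apply: zw; lia.
Qed.

Lemma det_anti_triangular_neq0 n (B : 'M[R]_n) c : (c != 0)%R ->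
  (forall i j : 'I_n, (n <= i + j)%N -> B i j = 0) ->
  (forall i, B i (rev_ord i) = c) -> (\det B != 0)%R.
Proof.
move=> c0 hB hc; pose s : 'S_n := perm (@rev_ord_inj n).
have : (\det (col_perm s B)^T = c ^+ n)%R.
  rewrite det_trig; last first.
    apply/is_trig_mxP => i j hij; rewrite !mxE permE hB //=.
    by have := ltn_ord i; lia.
  by rewrite (eq_bigr (fun _ => c)) ?prodr_const ?card_ord // => i _; rewrite !mxE permE hc.
rewrite det_tr col_permE det_mulmx det_perm => e; apply/eqP => h.
by move: e; rewrite h mul0r => /esym /eqP; rewrite expf_eq0 (negbTE c0) andbF.
Qed.

Definition cofactor00 r y := det (r - 1) (minor (SH r y) 0).

(* The minor is anti-triangular with [y_{r+1}] on its anti-diagonal. *)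
Lemma cofactor00_neq0 r y : (2 <= r)%nat -> y (r + 1)%nat <> 0 -> cofactor00 r y <> 0.
Proof.
move=> hr hy; rewrite /cofactor00 det_mx_of; apply/eqP.
apply: (@det_anti_triangular_neq0 _ _ (y (r + 1)%nat)); first exact/eqP.
  by move=> i j hij; rewrite mxE /minor /=; apply: SH_zero; lia.
move=> i; rewrite mxE /minor /= SH_val /=; last by have := ltn_ord i; lia.
by congr y; have := ltn_ord i; lia.
Qed.

Definition set1 (y : nat -> R) (v : R) : nat -> R := fun l => if Nat.eqb l 1 then v else y l.

Lemma minor_SH_set1 r y v j : minor (SH r (set1 y v)) j = minor (SH r y) j.
Proof.
apply: functional_extensionality => i; apply: functional_extensionality => l.
rewrite /minor /SH /set1; case: (Nat.leb_spec _ r) => // _.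
by case: (Nat.eqb_spec _ 1) => //; lia.
Qed.

Lemma P1_set1 r y v : (0 < r)%nat -> P1 r (set1 y v) = v * cofactor00 r y + P1 r (set1 y 0).
Proof.
move=> hr; rewrite /P1 /cofactor00; case: r hr => [|r'] // _.
rewrite /det -/det !rsum_recl.
have hrest w : rsum r' (fun k => (-1) ^ k.+1 * SH r'.+1 (set1 y w) 0%nat k.+1 *
     det r' (minor (SH r'.+1 (set1 y w)) k.+1)) =
   rsum r' (fun k => (-1) ^ k.+1 * SH r'.+1 y 0%nat k.+1 * det r' (minor (SH r'.+1 y) k.+1)).
  apply: eq_rsum => k hk; rewrite minor_SH_set1; congr (_ * _ * _).
  rewrite /SH /set1; case: (Nat.leb_spec _ _) => // _.
  by case: (Nat.eqb_spec _ 1) => //; lia.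
rewrite !hrest !minor_SH_set1 (_ : (r'.+1 - 1 = r')%nat); last lia.
by rewrite !SH_val /set1 /=; [ring | lia | lia].
Qed.

Lemma P1_first_row0 r y : (0 < r)%nat -> (forall l, (1 <= l)%nat -> (l <= r)%nat -> y l = 0) ->
  P1 r y = 0.
Proof.
move=> hr h; rewrite /P1; case: r hr h => [|r'] // _ h.
rewrite /det -/det; apply: rsum_eq0 => j hj.
by rewrite SH_val ?h; [lra | lia | lia | lia].
Qed.

Lemma P1_sparse r y : (0 < r)%nat -> (forall l, (2 <= l)%nat -> (l <= r)%nat -> y l = 0) ->
  P1 r y = y 1%nat * cofactor00 r y.
Proof.
move=> hr h.
have ey : set1 y (y 1%nat) = y.
  by apply: functional_extensionality => l; rewrite /set1; case: (Nat.eqb_spec l 1) => [->|].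
rewrite -{1}ey P1_set1 // (@P1_first_row0 r (set1 y 0)) // => [|l h1 h2]; first lra.
rewrite /set1; case: (Nat.eqb_spec l 1) => // l1.
by apply: h; lia.
Qed.

Definition npoint r (s e : R) : nat -> R :=
  fun l => if Nat.eqb l 1 then s else if Nat.eqb l (r + 1) then e else 0.

Lemma npoint_sparse r s e l : (2 <= l)%nat -> (l <= r)%nat -> npoint r s e l = 0.
Proof.
move=> h1 h2; rewrite /npoint.
by case: (Nat.eqb_spec l 1); case: (Nat.eqb_spec l (r + 1)) => //; lia.
Qed.

Lemma npoint_top r s e : (0 < r)%nat -> npoint r s e (r + 1)%nat = e.
Proof. by move=> hr; rewrite /npoint Nat.eqb_refl; case: (Nat.eqb_spec (r + 1) 1) => //; lia. Qed.

Lemma P1_npoint r s e : (0 < r)%nat -> P1 r (npoint r s e) = s * cofactor00 r (npoint r 1 e).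
Proof.
move=> hr; rewrite P1_sparse // => [|l]; last exact: npoint_sparse.
have -> : npoint r s e = set1 (npoint r 1 e) s.
  by apply: functional_extensionality => l; rewrite /npoint /set1; case: (Nat.eqb_spec l 1).
by rewrite /set1 /= /cofactor00 minor_SH_set1.
Qed.

Lemma sign_div x : x <> 0 -> (x / Rabs x = 1 \/ x / Rabs x = -1) /\ 0 < x / Rabs x * x.
Proof.
move=> hx; case: (Rcase_abs x) => h.
  rewrite Rabs_left //; split; first by right; field; lra.
  by rewrite (_ : x / - x * x = - x); [lra | field].
rewrite Rabs_right //; split; first by left; field; lra.
by rewrite (_ : x / x * x = x); [lra | field].
Qed.

Lemma gen_orbit_rescale r w : (2 <= r)%nat -> w 1%nat <> 0 -> w (r + 1)%nat <> 0 ->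
  (forall l, (2 <= l)%nat -> (l <= r)%nat -> w l = 0) ->
  gen_orbit r w (npoint r (w 1%nat / Rabs (w 1%nat)) (w (r + 1)%nat / Rabs (w (r + 1)%nat))).
Proof.
move=> hr hw1 hwr zw.
(* [expD a b] multiplies [y_l] by [exp (2 a + b (2 r + 1 - l))]; solve for the factors
   [1 / |w_1|] at [l = 1] and [1 / |w_{r+1}|] at [l = r + 1]. *)
set a := (ln (Rabs (w 1%nat)) - 2 * ln (Rabs (w (r + 1)%nat))) / 2.
set b := (ln (Rabs (w (r + 1)%nat)) - ln (Rabs (w 1%nat))) / INR r.
apply: (@gen_orbit_generator r (expD r a b)); first by right; exists a, b.
rewrite -(@SH_eq r (expD_coord r a b w) (npoint r _ _)); first exact: rho_expD_SH.
have hp : 0 < Rabs (w (r + 1)%nat) by apply: Rabs_pos_lt.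
have hq : 0 < Rabs (w 1%nat) by apply: Rabs_pos_lt.
have hr' : INR r <> 0 by apply: not_0_INR; lia.
move=> l h1 h2; rewrite /expD_coord /npoint.
case: (Nat.eqb_spec l 1) => [->|l1].
  rewrite (_ : INR (1 - 1) = 0) // (_ : 2 * a + b * (2 * INR r - 0) = - ln (Rabs (w 1%nat))).
    by rewrite exp_Ropp exp_ln //; field; lra.
  by rewrite /a /b; field.
case: (Nat.eqb_spec l (r + 1)) => [->|lr]; last by rewrite zw; [lra | lia | lia].
rewrite (_ : (r + 1 - 1 = r)%nat); last lia.
rewrite (_ : 2 * a + b * (2 * INR r - INR r) = - ln (Rabs (w (r + 1)%nat))).
  by rewrite exp_Ropp exp_ln //; field; lra.
by rewrite /a /b; field.
Qed.

Lemma gen_orbit_normal_form r y : (2 <= r)%nat -> P1 r y <> 0 -> P2 r y <> 0 ->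
  exists s e, (s = 1 \/ s = -1) /\ (e = 1 \/ e = -1) /\
    0 < e * P2 r y /\ 0 < P1 r (npoint r s e) * P1 r y /\ gen_orbit r y (npoint r s e).
Proof.
move=> hr hP1 hP2; have hr0 : (0 < r)%nat by lia.
have [w [hw [ew zw]]] := gen_orbit_sparse hr hP2.
have [c [d [hc [hd [Pw _]]]]] := orbit_scales_P1_P2 hr (gen_orbit_orbit hr0 hw).
have hw1 : w 1%nat <> 0.
  by move=> h0; move: Pw; rewrite (P1_sparse hr0 zw) h0; nra.
have hwr : w (r + 1)%nat <> 0 by rewrite ew.
have [hs1 hs2] := sign_div hw1; have [he1 he2] := sign_div hwr.
set s := w 1%nat / Rabs (w 1%nat); set e := w (r + 1)%nat / Rabs (w (r + 1)%nat).
have hyn : gen_orbit r y (npoint r s e) := gen_orbit_trans hw (gen_orbit_rescale hr hw1 hwr zw).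
have [c' [_ [hc' [_ [Pn _]]]]] := orbit_scales_P1_P2 hr (gen_orbit_orbit hr0 hyn).
exists s, e; do 3 (split => //); first by rewrite /P2 -ew.
by split => //; rewrite Pn Rmult_assoc; apply: Rmult_lt_0_compat => //; exact: Rsqr_pos_lt.
Qed.

Lemma pm1_eq s s' x x' : s = 1 \/ s = -1 -> s' = 1 \/ s' = -1 ->
  0 < s * x -> 0 < s' * x' -> x * x' > 0 -> s = s'.
Proof. by case=> ->; case=> -> => *; nra. Qed.

Lemma orbit_of_signs r y y' : (2 <= r)%nat -> P1 r y <> 0 -> P2 r y <> 0 ->
  P1 r y * P1 r y' > 0 -> P2 r y * P2 r y' > 0 -> orbit r y y'.
Proof.
move=> hr h1 h2 h3 h4.
have h1' : P1 r y' <> 0 by move=> e; rewrite e in h3; lra.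
have h2' : P2 r y' <> 0 by move=> e; rewrite e in h4; lra.
have [s [e [hs [he [hpe [hps hy]]]]]] := gen_orbit_normal_form hr h1 h2.
have [s' [e' [hs' [he' [hpe' [hps' hy']]]]]] := gen_orbit_normal_form hr h1' h2'.
have ee : e = e' := pm1_eq he he' hpe hpe' h4; subst e'.
have hr0 : (0 < r)%nat by lia.
move: hps hps'; rewrite !P1_npoint //; set C := cofactor00 r (npoint r 1 e) => hps hps'.
have hC : C <> 0 by move=> hC; rewrite hC in hps; lra.
have ss : s = s'.
  apply: (pm1_eq (x := C * P1 r y) (x' := C * P1 r y')) hs hs' _ _ _; try by rewrite -Rmult_assoc.
  rewrite (_ : C * P1 r y * (C * P1 r y') = (C * C) * (P1 r y * P1 r y')); last ring.
  by apply: Rmult_lt_0_compat => //; exact: Rsqr_pos_lt.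
subst s'; apply: gen_orbit_orbit hr0 _.
exact: gen_orbit_trans hy (gen_orbit_sym hy').
Qed.

Definition close r d (y y' : nat -> R) :=
  forall l, (1 <= l)%nat -> (l <= r + 1)%nat -> Rabs (y' l - y l) < d.

Definition coord_continuous r (F : (nat -> R) -> R) := forall y e, 0 < e ->
  exists d, 0 < d /\ forall y', close r d y y' -> Rabs (F y' - F y) < e.

Lemma close_le r d d' y y' : d <= d' -> close r d y y' -> close r d' y y'.
Proof. by move=> h hb l h1 h2; have := hb l h1 h2; lra. Qed.

Section CoordContinuous.
Variable r : nat.

Lemma continuous_const c : coord_continuous r (fun _ => c).
Proof.
move=> y e he; exists 1; split=> [|y' _]; first lra.
by rewrite Rminus_diag Rabs_R0.
Qed.

Lemma continuous_coord l : (1 <= l)%nat -> (l <= r + 1)%nat -> coord_continuous r (fun y => y l).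
Proof. by move=> h1 h2 y e he; exists e; split => // y' hb; apply: hb. Qed.

Lemma continuous_add F G : coord_continuous r F -> coord_continuous r G ->
  coord_continuous r (fun y => F y + G y).
Proof.
move=> hF hG y e he.
have [d1 [hd1 h1]] := hF y (e / 2) ltac:(lra).
have [d2 [hd2 h2]] := hG y (e / 2) ltac:(lra).
exists (Rmin d1 d2); split=> [|y' hb]; first exact: Rmin_glb_lt.
have := h1 y' (close_le (Rmin_l d1 d2) hb); have := h2 y' (close_le (Rmin_r d1 d2) hb).
have := Rabs_triang (F y' - F y) (G y' - G y).
by rewrite (_ : F y' - F y + (G y' - G y) = F y' + G y' - (F y + G y)); [lra | ring].
Qed.

Lemma continuous_mul F G : coord_continuous r F -> coord_continuous r G ->
  coord_continuous r (fun y => F y * G y).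
Proof.
move=> hF hG y e he.
set a := Rabs (F y); set b := Rabs (G y).
have ha : 0 <= a by apply: Rabs_pos.
have hb : 0 <= b by apply: Rabs_pos.
set e1 := Rmin 1 (e / (a + b + 1)).
have he1 : 0 < e1 by apply: Rmin_glb_lt; [lra | apply: Rdiv_lt_0_compat; lra].
have he1a : e1 <= 1 by apply: Rmin_l.
have he1b : e1 * (a + b + 1) <= e.
  apply: (Rle_trans _ (e / (a + b + 1) * (a + b + 1))); last by right; field; lra.
  by apply: Rmult_le_compat_r; [lra | apply: Rmin_r].
have [d1 [hd1 h1]] := hF y e1 he1.
have [d2 [hd2 h2]] := hG y e1 he1.
exists (Rmin d1 d2); split=> [|y' hy']; first exact: Rmin_glb_lt.
have f1 := h1 y' (close_le (Rmin_l d1 d2) hy').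
have f2 := h2 y' (close_le (Rmin_r d1 d2) hy').
have hF' : Rabs (F y') <= a + 1.
  have := Rabs_triang (F y' - F y) (F y).
  by rewrite (_ : F y' - F y + F y = F y'); [rewrite /a; lra | ring].
rewrite (_ : F y' * G y' - F y * G y = F y' * (G y' - G y) + (F y' - F y) * G y); last ring.
apply: Rle_lt_trans (Rabs_triang _ _) _; rewrite !Rabs_mult.
have p1 : Rabs (F y') * Rabs (G y' - G y) < (a + 1) * e1.
  apply: (@Rle_lt_trans _ ((a + 1) * Rabs (G y' - G y))).
    by apply: Rmult_le_compat_r; [apply: Rabs_pos | lra].
  by apply: Rmult_lt_compat_l; lra.
have p2 : Rabs (F y' - F y) * Rabs (G y) <= e1 * b.
  by apply: Rmult_le_compat; try apply: Rabs_pos; rewrite /b; lra.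
lra.
Qed.

Lemma continuous_rsum n (G : nat -> (nat -> R) -> R) :
  (forall j, coord_continuous r (G j)) -> coord_continuous r (fun y => rsum n (fun j => G j y)).
Proof.
move=> h; elim: n => [|n IH] /=; first exact: continuous_const.
exact: continuous_add.
Qed.

Lemma continuous_det n (A : (nat -> R) -> mat) :
  (forall i j, coord_continuous r (fun y => A y i j)) -> coord_continuous r (fun y => det n (A y)).
Proof.
elim: n A => [|n IH] A h; first exact: continuous_const.
apply: (@continuous_rsum n.+1 (fun j y => (-1) ^ j * A y 0%nat j * det n (minor (A y) j))) => j.
apply: continuous_mul; first by apply: continuous_mul; [exact: continuous_const | exact: h].
by apply: (IH (fun y => minor (A y) j)) => i l; exact: h.
Qed.

Lemma continuous_P1 : coord_continuous r (P1 r).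
Proof.
apply: (@continuous_det r (SH r)) => i j; rewrite /SH.
case: (Nat.leb_spec (i + j) r) => h; last exact: continuous_const.
by apply: continuous_coord; lia.
Qed.

End CoordContinuous.

Lemma sign_stable u u' : u <> 0 -> Rabs (u' - u) < Rabs u -> u * u' > 0.
Proof.
move=> hu; case: (Rcase_abs u) => h.
  by rewrite (Rabs_left u) // => h'; have := Rle_abs (u' - u); nra.
rewrite (Rabs_right u) // => h'; have := Rle_abs (- (u' - u)); rewrite Rabs_Ropp; nra.
Qed.

Lemma same_sign_trans a u u' : a * u > 0 -> u * u' > 0 -> a * u' > 0.
Proof.
move=> h1 h2; have : (a * u) * (u * u') > 0 by apply: Rmult_lt_0_compat.
have : u * u > 0 by nra.
nra.
Qed.

Lemma SH_open_signs r y0 :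
  SH_open r (fun y' => P1 r y0 * P1 r y' > 0 /\ P2 r y0 * P2 r y' > 0).
Proof.
move=> y [h1 h2].
have hu : P1 r y <> 0 by move=> e; rewrite e in h1; lra.
have hv : P2 r y <> 0 by move=> e; rewrite e in h2; lra.
have [d1 [hd1 hc]] := @continuous_P1 r y (Rabs (P1 r y)) (Rabs_pos_lt _ hu).
exists (Rmin d1 (Rabs (P2 r y))); split; first by apply: Rmin_glb_lt => //; exact: Rabs_pos_lt.
move=> y' hy'.
have hb : close r (Rmin d1 (Rabs (P2 r y))) y y' by move=> l a b; apply: hy'; lia.
split.
- apply: same_sign_trans h1 _; apply: sign_stable => //.
  exact: hc (close_le (Rmin_l _ _) hb).
- apply: same_sign_trans h2 _; apply: sign_stable => //.
  exact: Rlt_le_trans (hb (r + 1)%nat ltac:(lia) (leqnn _)) (Rmin_r _ _).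
Qed.

Lemma orbit_sign_classes r y : (2 <= r)%nat -> P1 r y <> 0 -> P2 r y <> 0 ->
  forall y', orbit r y y' <-> (P1 r y * P1 r y' > 0 /\ P2 r y * P2 r y' > 0).
Proof.
move=> hr h1 h2 y'; split=> [ho | [h3 h4]]; last exact: orbit_of_signs.
have [c [d [hc [hd [-> ->]]]]] := orbit_scales_P1_P2 hr ho.
by split; [have : P1 r y * P1 r y > 0 | have : P2 r y * P2 r y > 0]; nra.
Qed.

Lemma SH_open_orbit r y0 : (2 <= r)%nat -> P1 r y0 <> 0 -> P2 r y0 <> 0 ->
  SH_open r (orbit r y0).
Proof.
move=> hr h1 h2 y /(orbit_sign_classes hr h1 h2) hy.
have [eps [he hS]] := SH_open_signs hy.
by exists eps; split => // y' hb; apply/(orbit_sign_classes hr h1 h2); apply: hS.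
Qed.

(* [P1] is affine in [y_1] with slope the cofactor, which is nonzero once [y_{r+1} <> 0]. *)
Lemma nonsingular_dense r y eps : (2 <= r)%nat -> 0 < eps ->
  exists y'', close r eps y y'' /\ P1 r y'' <> 0 /\ P2 r y'' <> 0.
Proof.
move=> hr he.
have [w [hw hw2]] : exists w, w <> 0 /\ Rabs (w - y (r + 1)%nat) < eps.
  case: (Req_EM_T (y (r + 1)%nat) 0) => h.
    by exists (eps / 2); split; [lra | rewrite h Rminus_0_r Rabs_right; lra].
  by exists (y (r + 1)%nat); split => //; rewrite Rminus_diag Rabs_R0.
set y1 := fun l => if Nat.eqb l (r + 1) then w else y l.
have hC : cofactor00 r y1 <> 0 by apply: cofactor00_neq0 => //; rewrite /y1 Nat.eqb_refl.
set K := P1 r (set1 y1 0).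
have [v [hv1 hv2]] : exists v, Rabs (v - y 1%nat) < eps /\ v * cofactor00 r y1 + K <> 0.
  case: (Req_EM_T (y 1%nat * cofactor00 r y1 + K) 0) => h.
    exists (y 1%nat + eps / 2); split.
      by rewrite (_ : y 1%nat + eps / 2 - y 1%nat = eps / 2) ?Rabs_right; [lra | lra | ring].
    rewrite (_ : (y 1%nat + eps / 2) * cofactor00 r y1 + K = eps / 2 * cofactor00 r y1); last lra.
    by apply: Rmult_integral_contrapositive_currified => // e; lra.
  by exists (y 1%nat); split => //; rewrite Rminus_diag Rabs_R0.
exists (set1 y1 v); split; last split.
- move=> l h1 h2; rewrite /set1 /y1.
  case: (Nat.eqb_spec l 1) => [-> //|_].
  case: (Nat.eqb_spec l (r + 1)) => [-> //|_].
  by rewrite Rminus_diag Rabs_R0.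
- by rewrite P1_set1 //; lia.
- rewrite /P2 /set1 /y1 Nat.eqb_refl.
  by case: (Nat.eqb_spec (r + 1)%coq_nat 1) => //; lia.
Qed.

Lemma open_orbit_nonsingular r y0 y : (2 <= r)%nat ->
  SH_open r (orbit r y0) -> orbit r y0 y -> P1 r y * P2 r y <> 0.
Proof.
move=> hr hop hy.
have [eps [he hS]] := hop y hy.
have [y'' [hb [n1 n2]]] := nonsingular_dense y hr he.
have hy'' : orbit r y0 y'' by apply: hS => l [h1 h2]; apply: hb; lia.
have [c [d [hc [hd [e1 e2]]]]] := orbit_scales_P1_P2 hr hy''.
have [c' [d' [hc' [hd' [-> ->]]]]] := orbit_scales_P1_P2 hr hy.
have q1 : P1 r y0 <> 0 by move=> e; apply: n1; rewrite e1 e; ring.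
have q2 : P2 r y0 <> 0 by move=> e; apply: n2; rewrite e2 e; ring.
by repeat apply: Rmult_integral_contrapositive_currified => //; lra.
Qed.

Theorem proposition1 (r : nat) (hr : (2 <= r)%coq_nat) :
  (forall y : nat -> R, P1 r y <> 0 -> P2 r y <> 0 ->
     forall y' : nat -> R,
       orbit r y y' <-> (P1 r y * P1 r y' > 0 /\ P2 r y * P2 r y' > 0))
  /\ (exists y0 : nat -> R, SH_open r (orbit r y0))
  /\ (forall y : nat -> R,
        (~ exists y0 : nat -> R, SH_open r (orbit r y0) /\ orbit r y0 y)
        <-> P1 r y * P2 r y = 0).
Proof.
have {}hr : (2 <= r)%nat by apply/ssrnat.leP.
have hr0 : (0 < r)%nat by lia.
split; first by move=> y; exact: orbit_sign_classes.
split.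
  exists (npoint r 1 1); apply: SH_open_orbit => //.
    rewrite P1_npoint // Rmult_1_l; apply: cofactor00_neq0 => //.
    by rewrite npoint_top //; lra.
  by rewrite /P2 npoint_top //; lra.
move=> y; split=> [hn | h0 [y0 [hop hy]]]; last exact: open_orbit_nonsingular hop hy h0.
case: (Req_EM_T (P1 r y * P2 r y) 0) => // h; case: hn; exists y.
split; last exact: gen_orbit_orbit hr0 (gen_orbit_refl r y).
by apply: SH_open_orbit => // e; apply: h; rewrite e; ring.
Qed.
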